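(* For every $d\ge 1$ there is a constant $C_d$ such that the following holds. Let $\sigma\in(0,1)$ and let $L$ be a finite set of closed line segments in $\mathbb{R}^d$ such that (i) $L$ is $\sigma$-exposed and (ii) $\bigcap_{s\in L} s\neq\emptyset$. Then $|L|\le C_d/\sigma^{d+2}$.
   Context: For sets $X, Y\subseteq\mathbb{R}^d$ and $\sigma>0$, $X$ $\sigma$-shadows $Y$ if $\max_{q\in Y} \mathrm{dist}(q, X) \le \sigma\cdot \mathrm{diam}(Y)$, where $\mathrm{dist}(q,X)=\min_{p\in X}\|q-p\|$. A set of objects is $\sigma$-exposed if no object in the set $\sigma$-shadows another (distinct) object of the set. *)

From Stdlib Require Import Reals List.
Open Scope R_scope.

(* A point of R^d is represented as a function nat -> R whose coordinates
   of index >= d vanish (see [in_Rd]). *)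
Definition point := nat -> R.

Definition in_Rd (d : nat) (x : point) : Prop := forall i, (d <= i)%nat -> x i = 0.

Fixpoint sqdist (n : nat) (x y : point) : R :=
  match n with
  | O => 0
  | S k => sqdist k x y + (x k - y k) ^ 2
  end.

Definition dist (d : nat) (x y : point) : R := sqrt (sqdist d x y).

Definition segment := (point * point)%type.

Definition in_seg (s : segment) (x : point) : Prop :=
  exists t, 0 <= t <= 1 /\ forall i, x i = fst s i + t * (snd s i - fst s i).

Definition is_segment (d : nat) (s : segment) : Prop :=
  in_Rd d (fst s) /\ in_Rd d (snd s) /\ fst s <> snd s.

Definition seg_diam (d : nat) (s : segment) : R := dist d (fst s) (snd s).

(* X sigma-shadows Y : max_{q in Y} dist(q, X) <= sigma * diam(Y).
   Since X is compact, dist(q,X) is attained, so this says: every q in Y has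
   some p in X with |q - p| <= sigma * diam(Y). *)
Definition seg_shadows (d : nat) (sigma : R) (X Y : segment) : Prop :=
  forall q, in_seg Y q -> exists p, in_seg X p /\ dist d q p <= sigma * seg_diam d Y.

Definition same_set (s t : segment) : Prop := forall x, in_seg s x <-> in_seg t x.

(* The list L represents a finite set of segments: distinct entries are
   distinct point sets. *)
Definition distinct_segs (L : list segment) : Prop :=
  forall i j, (i < length L)%nat -> (j < length L)%nat -> i <> j ->
    ~ same_set (nth i L (fun _ => 0, fun _ => 0)) (nth j L (fun _ => 0, fun _ => 0)).

Definition exposed (d : nat) (sigma : R) (L : list segment) : Prop :=
  forall i j, (i < length L)%nat -> (j < length L)%nat -> i <> j ->
    ~ seg_shadows d sigma (nth i L (fun _ => 0, fun _ => 0)) (nth j L (fun _ => 0, fun _ => 0)).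

(* Record each segment through the common point x by the parameter t with
   x = a + t (b - a) and by its unit direction (b - a) / |b - a|: d + 1 numbers
   in [-1, 1].  If two segments X, Y with |Y| <= |X| have all these numbers
   within h = sigma / (2 d) of each other, then rescaling Y about x by the
   ratio |Y| / |X| maps it onto a part of X at distance at most
   2 h sqrt d |Y| <= sigma |Y|, so X sigma-shadows Y.  Cutting [-1, 1] into
   O(1 / h) cells, an exposed family thus meets each of the O(h^-(d+1)) cells
   of the grid at most once; this even gives |L| = O(sigma^-(d+1)). *)

From Stdlib Require Import Reals List Lra Lia ZArith ClassicalEpsilon FunctionalExtensionality.
Open Scope R_scope.

Lemma sqdist_ge0 n x y : 0 <= sqdist n x y.
Proof.
  induction n as [|n IH]; simpl; [lra|].
  pose proof (pow2_ge_0 (x n - y n)); lra.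
Qed.

Lemma sqdist_ge_coord n x y i : (i < n)%nat -> (x i - y i) ^ 2 <= sqdist n x y.
Proof.
  induction n as [|n IH]; intros Hi; [lia|]; simpl.
  destruct (Nat.eq_dec i n) as [->|Hne].
  - pose proof (sqdist_ge0 n x y); lra.
  - pose proof (pow2_ge_0 (x n - y n)); specialize (IH ltac:(lia)); lra.
Qed.

Lemma sqdist_le_uniform n x y c :
  (forall i, (i < n)%nat -> (x i - y i) ^ 2 <= c) -> sqdist n x y <= INR n * c.
Proof.
  induction n as [|n IH]; intros H; simpl sqdist; [simpl; lra|].
  rewrite S_INR.
  assert (sqdist n x y <= INR n * c) by (apply IH; intros; apply H; lia).
  assert ((x n - y n) ^ 2 <= c) by (apply H; lia).
  lra.
Qed.

Lemma seg_diam_gt0 d s : is_segment d s -> 0 < seg_diam d s.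
Proof.
  intros [Ha [Hb Hne]]; unfold seg_diam, dist; apply sqrt_lt_R0.
  destruct (Rle_lt_dec (sqdist d (fst s) (snd s)) 0) as [Hle|]; [|assumption].
  exfalso; apply Hne, functional_extensionality; intros i.
  destruct (Nat.lt_ge_cases i d) as [Hi|Hi].
  - pose proof (sqdist_ge_coord d (fst s) (snd s) i Hi); nra.
  - now rewrite (Ha i Hi), (Hb i Hi).
Qed.

Definition seg_dir d (s : segment) i := (snd s i - fst s i) / seg_diam d s.

Lemma Rabs_le_between a b : Rabs a <= b -> - b <= a <= b.
Proof. unfold Rabs; destruct Rcase_abs; intros; lra. Qed.

Lemma seg_dir_bound d s i : is_segment d s -> (i < d)%nat -> Rabs (seg_dir d s i) <= 1.
Proof.
  intros Hs Hi; pose proof (seg_diam_gt0 d s Hs) as HD.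
  assert (Hc : Rabs (snd s i - fst s i) <= seg_diam d s).
  { unfold seg_diam, dist.
    rewrite <- (sqrt_pow2 (Rabs (snd s i - fst s i))) by apply Rabs_pos.
    apply sqrt_le_1_alt; rewrite pow2_abs.
    replace ((snd s i - fst s i) ^ 2) with ((fst s i - snd s i) ^ 2) by ring.
    now apply sqdist_ge_coord. }
  unfold seg_dir, Rdiv; rewrite Rabs_mult, Rabs_inv, (Rabs_pos_eq (seg_diam d s)) by lra.
  apply Rmult_le_reg_r with (seg_diam d s); [lra|].
  rewrite Rmult_assoc, Rinv_l by lra; lra.
Qed.

Definition seg_param (x : point) (s : segment) : R :=
  epsilon (inhabits 0)
    (fun t => 0 <= t <= 1 /\ forall i, x i = fst s i + t * (snd s i - fst s i)).

Lemma seg_param_spec x s : in_seg s x ->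
  0 <= seg_param x s <= 1 /\ forall i, x i = fst s i + seg_param x s * (snd s i - fst s i).
Proof. intros Hx; unfold seg_param; apply epsilon_spec, Hx. Qed.

Definition seg_features d x s j :=
  match j with O => seg_param x s | S k => seg_dir d s k end.

Lemma seg_features_bound d x s j : is_segment d s -> in_seg s x -> (j < S d)%nat ->
  -1 <= seg_features d x s j <= 1.
Proof.
  intros Hs Hx Hj; destruct j as [|k]; simpl.
  - destruct (seg_param_spec x s Hx); lra.
  - apply Rabs_le_between, seg_dir_bound; [assumption | lia].
Qed.

Lemma convex_comb_in_unit t s l : 0 <= t <= 1 -> 0 <= s <= 1 -> 0 <= l <= 1 ->
  0 <= t + l * (s - t) <= 1.
Proof. intros; split; nra. Qed.

Lemma mixed_term_bound D s tX tY eX eY h :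
  0 <= D -> 0 <= s <= 1 -> 0 <= tY <= 1 -> Rabs eX <= 1 ->
  Rabs (tX - tY) <= h -> Rabs (eX - eY) <= h ->
  Rabs (D * ((s - tY) * (eY - eX) + (tX - tY) * eX)) <= 2 * h * D.
Proof.
  intros HD Hs HtY HeX Ht He.
  assert (Hst : Rabs (s - tY) <= 1) by (apply Rabs_le; lra).
  rewrite Rabs_minus_sym in He.
  rewrite Rabs_mult, (Rabs_pos_eq D HD).
  replace (2 * h * D) with (D * (1 * h + h * 1)) by ring.
  apply Rmult_le_compat_l; [lra|].
  eapply Rle_trans; [apply Rabs_triang|]; rewrite !Rabs_mult.
  apply Rplus_le_compat; apply Rmult_le_compat; auto using Rabs_pos.
Qed.

Lemma shadows_of_close_features d sigma h x (X Y : segment) :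
  is_segment d X -> is_segment d Y -> in_seg X x -> in_seg Y x ->
  seg_diam d Y <= seg_diam d X ->
  (forall j, (j < S d)%nat -> Rabs (seg_features d x X j - seg_features d x Y j) <= h) ->
  INR d * (2 * h) ^ 2 <= sigma ^ 2 -> 0 <= sigma ->
  seg_shadows d sigma X Y.
Proof.
  intros HX HY HxX HxY HD Hclose Hh Hsig q [s [Hs Hq]].
  destruct (seg_param_spec x X HxX) as [HtX EX].
  destruct (seg_param_spec x Y HxY) as [HtY EY].
  set (tX := seg_param x X) in *; set (tY := seg_param x Y) in *.
  assert (Ht : Rabs (tX - tY) <= h) by exact (Hclose 0%nat ltac:(lia)).
  pose proof (seg_diam_gt0 d X HX); pose proof (seg_diam_gt0 d Y HY).
  set (DX := seg_diam d X) in *; set (DY := seg_diam d Y) in *.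
  assert (Hratio : 0 <= DY / DX <= 1).
  { split; [apply Rlt_le, Rdiv_lt_0_compat; lra|].
    apply Rmult_le_reg_r with DX; [lra|].
    unfold Rdiv; rewrite Rmult_assoc, Rinv_l by lra; lra. }
  (* the point of X matching q under the homothety of centre x and ratio DY/DX *)
  set (r := tX + DY / DX * (s - tX)).
  exists (fun i => fst X i + r * (snd X i - fst X i)); split.
  { exists r; split; [now apply convex_comb_in_unit | reflexivity]. }
  assert (h0 : 0 <= h) by (pose proof (Rabs_pos (tX - tY)); lra).
  unfold dist; rewrite <- (sqrt_pow2 (sigma * DY)) by (apply Rmult_le_pos; lra).
  apply sqrt_le_1_alt, Rle_trans with (INR d * (2 * h * DY) ^ 2).
  - apply sqdist_le_uniform; intros i Hi; apply pow_maj_Rabs.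
    assert (HeX : Rabs (seg_dir d X i) <= 1)
      by (apply seg_dir_bound; assumption).
    assert (He : Rabs (seg_dir d X i - seg_dir d Y i) <= h)
      by exact (Hclose (S i) ltac:(lia)).
    replace (q i - (fst X i + r * (snd X i - fst X i)))
      with (DY * ((s - tY) * (seg_dir d Y i - seg_dir d X i)
                  + (tX - tY) * seg_dir d X i)).
    + apply mixed_term_bound; lra.
    + assert (E : q i - (fst X i + r * (snd X i - fst X i))
                  - DY * ((s - tY) * (seg_dir d Y i - seg_dir d X i)
                          + (tX - tY) * seg_dir d X i)
                  = (fst Y i + tY * (snd Y i - fst Y i))
                    - (fst X i + tX * (snd X i - fst X i))).
      { rewrite Hq; unfold seg_dir, r; fold DX DY; field; lra. }
      rewrite <- EX, <- EY in E; lra.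
  - replace ((sigma * DY) ^ 2) with (sigma ^ 2 * DY ^ 2) by ring.
    replace (INR d * (2 * h * DY) ^ 2) with (INR d * (2 * h) ^ 2 * DY ^ 2) by ring.
    apply Rmult_le_compat_r; [apply pow2_ge_0 | lra].
Qed.

Fixpoint base_code (N m : nat) (f : nat -> nat) : nat :=
  match m with O => O | S k => (f k + N * base_code N k f)%nat end.

Lemma base_code_lt N m f :
  (forall j, (j < m)%nat -> (f j < N)%nat) -> (base_code N m f < N ^ m)%nat.
Proof.
  induction m as [|m IH]; intros H; simpl; [lia|].
  assert (base_code N m f < N ^ m)%nat by (apply IH; intros; apply H; lia).
  assert (f m < N)%nat by (apply H; lia).
  nia.
Qed.

Lemma base_code_inj N m f g :
  (forall j, (j < m)%nat -> (f j < N)%nat) -> (forall j, (j < m)%nat -> (g j < N)%nat) ->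
  base_code N m f = base_code N m g -> forall j, (j < m)%nat -> f j = g j.
Proof.
  induction m as [|m IH]; intros Hf Hg E j Hj; [lia|]; simpl in E.
  assert (f m < N)%nat by (apply Hf; lia).
  assert (g m < N)%nat by (apply Hg; lia).
  assert (Ecode : base_code N m f = base_code N m g)
    by (destruct (Nat.lt_total (base_code N m f) (base_code N m g)) as [|[|]]; nia).
  destruct (Nat.eq_dec j m) as [->|]; [lia|].
  apply IH; try (intros; (apply Hf || apply Hg); lia); assumption || lia.
Qed.

Lemma le_of_injective_bounded n M (F : nat -> nat) :
  (forall i, (i < n)%nat -> (F i < M)%nat) ->
  (forall i j, (i < n)%nat -> (j < n)%nat -> F i = F j -> i = j) -> (n <= M)%nat.
Proof.
  intros HM HI.
  assert (Hlen := NoDup_incl_length (l := map F (seq 0 n)) (l' := seq 0 M)).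
  rewrite length_map, !length_seq in Hlen; apply Hlen.
  - apply NoDup_map_NoDup_ForallPairs; [|apply seq_NoDup].
    intros i j Hi Hj; apply in_seq in Hi, Hj; apply HI; lia.
  - intros b Hb; apply in_map_iff in Hb as [a [<- Ha]]; apply in_seq in Ha.
    apply in_seq; specialize (HM a ltac:(lia)); lia.
Qed.

Lemma pigeonhole_grid n m N (F : nat -> nat -> nat) :
  (forall i j, (i < n)%nat -> (j < m)%nat -> (F i j < N)%nat) ->
  (forall i k, (i < n)%nat -> (k < n)%nat ->
     (forall j, (j < m)%nat -> F i j = F k j) -> i = k) ->
  (n <= N ^ m)%nat.
Proof.
  intros HF Hsep.
  apply (le_of_injective_bounded n _ (fun i => base_code N m (F i))).
  - intros i Hi; apply base_code_lt; auto.
  - intros i k Hi Hk E; apply Hsep; auto.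
    eapply base_code_inj; eauto.
Qed.

(* [up r] is the integer in ]r, r + 1], so [cell h y] numbers the cells of width h
   covering [-1, 1] from the left, starting at 1. *)
Definition cell h y := Z.to_nat (up ((y + 1) / h)).
Definition ncells h := Z.to_nat (up (2 / h + 1)).

Lemma up_ge0 r : 0 <= r -> (0 <= up r)%Z.
Proof. intros; destruct (archimed r); apply le_IZR; lra. Qed.

Lemma cell_lt h y : 0 < h -> -1 <= y <= 1 -> (cell h y < ncells h)%nat.
Proof.
  intros Hh Hy; unfold cell, ncells.
  assert (0 <= (y + 1) / h) by (apply Rmult_le_pos; [|apply Rlt_le, Rinv_0_lt_compat]; lra).
  assert ((y + 1) / h <= 2 / h) by (apply Rmult_le_compat_r; [apply Rlt_le, Rinv_0_lt_compat|]; lra).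
  apply Z2Nat.inj_lt; try apply up_ge0; try lra.
  apply lt_IZR; destruct (archimed ((y + 1) / h)), (archimed (2 / h + 1)); lra.
Qed.

Lemma cell_close h y1 y2 : 0 < h -> -1 <= y1 <= 1 -> -1 <= y2 <= 1 ->
  cell h y1 = cell h y2 -> Rabs (y1 - y2) <= h.
Proof.
  intros Hh Hy1 Hy2 E; unfold cell in E.
  apply Z2Nat.inj in E; try (apply up_ge0, Rmult_le_pos; [|apply Rlt_le, Rinv_0_lt_compat]; lra).
  destruct (archimed ((y1 + 1) / h)), (archimed ((y2 + 1) / h)).
  rewrite E in *.
  assert (Hq : Rabs ((y1 - y2) / h) <= 1)
    by (apply Rabs_le; replace ((y1 - y2) / h) with ((y1 + 1) / h - (y2 + 1) / h)
          by (field; lra); lra).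
  unfold Rdiv in Hq; rewrite Rabs_mult, Rabs_inv, (Rabs_pos_eq h) in Hq by lra.
  apply Rmult_le_reg_r with (/ h); [apply Rinv_0_lt_compat; lra|].
  rewrite Rinv_r by lra; lra.
Qed.

Lemma ncells_le h : 0 < h -> INR (ncells h) <= 2 / h + 2.
Proof.
  intros Hh; unfold ncells; rewrite INR_IZR_INZ, Z2Nat.id.
  - destruct (archimed (2 / h + 1)); lra.
  - apply up_ge0; assert (0 < 2 / h) by (apply Rdiv_lt_0_compat; lra); lra.
Qed.

Lemma exposed_length_le_cells d sigma h (L : list segment) x :
  0 < h -> INR d * (2 * h) ^ 2 <= sigma ^ 2 -> 0 <= sigma ->
  (forall s, In s L -> is_segment d s) -> exposed d sigma L ->
  (forall s, In s L -> in_seg s x) ->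
  (length L <= ncells h ^ S d)%nat.
Proof.
  intros Hh Hhs Hsig Hseg Hexp Hx.
  set (dflt := (fun _ : nat => 0, fun _ : nat => 0) : segment).
  assert (Hfeat : forall i j, (i < length L)%nat -> (j < S d)%nat ->
            -1 <= seg_features d x (nth i L dflt) j <= 1).
  { intros i j Hi Hj; apply seg_features_bound; auto using nth_In. }
  apply (pigeonhole_grid _ _ _ (fun i j => cell h (seg_features d x (nth i L dflt) j))).
  - intros i j Hi Hj; apply cell_lt; auto.
  - intros i k Hi Hk Hcell.
    destruct (Nat.eq_dec i k) as [|Hik]; [assumption | exfalso].
    assert (Hclose : forall j, (j < S d)%nat ->
              Rabs (seg_features d x (nth i L dflt) j - seg_features d x (nth k L dflt) j) <= h)
      by (intros j Hj; apply cell_close; auto).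
    destruct (Rle_dec (seg_diam d (nth k L dflt)) (seg_diam d (nth i L dflt))).
    + apply (Hexp i k Hi Hk Hik); fold dflt.
      apply (shadows_of_close_features d sigma h x); auto using nth_In.
    + apply (Hexp k i Hk Hi (not_eq_sym Hik)); fold dflt.
      apply (shadows_of_close_features d sigma h x); auto using nth_In; [lra|].
      intros j Hj; rewrite Rabs_minus_sym; auto.
Qed.

Lemma cells_count_le d sigma : (1 <= d)%nat -> 0 < sigma < 1 ->
  INR (ncells (sigma / (2 * INR d))) ^ S d <= (4 * INR d + 2) ^ S d / sigma ^ (d + 2).
Proof.
  intros Hd Hs.
  assert (Hd1 : 1 <= INR d) by (apply (le_INR 1); lia).
  assert (Hh : 0 < sigma / (2 * INR d)) by (apply Rdiv_lt_0_compat; lra).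
  assert (Hcells : INR (ncells (sigma / (2 * INR d))) <= (4 * INR d + 2) / sigma).
  { eapply Rle_trans; [apply ncells_le, Hh|].
    replace (2 / (sigma / (2 * INR d))) with (4 * INR d / sigma) by (field; lra).
    replace ((4 * INR d + 2) / sigma) with (4 * INR d / sigma + 2 / sigma) by (field; lra).
    assert (2 <= 2 / sigma); [|lra].
    apply Rmult_le_reg_r with sigma; [lra|].
    unfold Rdiv; rewrite Rmult_assoc, Rinv_l by lra; lra. }
  apply Rle_trans with (((4 * INR d + 2) / sigma) ^ S d).
  { apply pow_incr; split; [apply pos_INR | exact Hcells]. }
  replace (d + 2)%nat with (S (S d)) by lia.
  unfold Rdiv; rewrite Rpow_mult_distr, <- !pow_inv.
  apply Rmult_le_compat_l; [apply pow_le; lra|].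
  assert (Hinv : 1 <= / sigma) by (rewrite <- Rinv_1; apply Rinv_le_contravar; lra).
  simpl; rewrite <- (Rmult_1_l (/ sigma * _)) at 1.
  apply Rmult_le_compat_r; [|exact Hinv].
  apply Rmult_le_pos; [lra | apply pow_le; lra].
Qed.

Theorem mainTheorem6 :
  forall d : nat, (1 <= d)%nat ->
  exists C : R,
    forall (sigma : R) (L : list segment),
      0 < sigma < 1 ->
      (forall s, In s L -> is_segment d s) ->
      distinct_segs L ->
      exposed d sigma L ->
      (exists x : point, forall s, In s L -> in_seg s x) ->
      INR (length L) <= C / sigma ^ (d + 2).
Proof.
  intros d Hd; exists ((4 * INR d + 2) ^ S d).
  intros sigma L Hs Hseg _ Hexp [x Hx].
  assert (Hd1 : 1 <= INR d) by (apply (le_INR 1); lia).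
  set (h := sigma / (2 * INR d)).
  assert (Hh : 0 < h) by (apply Rdiv_lt_0_compat; lra).
  assert (Hhs : INR d * (2 * h) ^ 2 <= sigma ^ 2).
  { replace (INR d * (2 * h) ^ 2) with (sigma ^ 2 / INR d) by (unfold h; field; lra).
    apply Rmult_le_reg_r with (INR d); [lra|].
    unfold Rdiv; rewrite Rmult_assoc, Rinv_l by lra.
    pose proof (pow2_ge_0 sigma); nra. }
  apply Rle_trans with (INR (ncells h ^ S d)).
  - apply le_INR, (exposed_length_le_cells d sigma h L x); auto; lra.
  - rewrite pow_INR; apply cells_count_le; assumption.
Qed.
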